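(* Let $\mu,\sigma$ be nonzero constants, let $J$ be an open interval, let $a$ be a smooth function on $J$ with $a(y)\neq0$, and let $A$ be an antiderivative of $a$ on $J$ with $A(y)\neq0$ for all $y\in J$. Consider the PDE $$a'(y)U-a(y)U_y-3\mu U^2U_r+\sigma U_yU_{rr}-\sigma UU_{rry}=0$$ for $U=U(r,y)$, $(r,y)\in\mathbb{R}\times J$. For a smooth function $R$ on $\mathbb{R}$, the function $$U(r,y)=a(y)A(y)^{-2/3}R\big(rA(y)^{1/3}\big)$$ (real cube roots) solves this PDE if and only if $R=R(z)$ satisfies $$-\sigma zRR'''+\sigma zR'R''-2\sigma RR''-9\mu R^2R'-zR'+2R=0.$$ *)

From Stdlib Require Import Reals.
From Coquelicot Require Import Coquelicot.
Open Scope R_scope.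

Definition cbrt (x : R) : R :=
  if Rlt_dec 0 x then Rpower x (1/3)
  else if Rlt_dec x 0 then - Rpower (- x) (1/3) else 0.

Definition in_open_interval (lo hi : Rbar) (y : R) : Prop :=
  Rbar_lt lo y /\ Rbar_lt y hi.

Definition smooth_on (D : R -> Prop) (f : R -> R) : Prop :=
  forall (n : nat) (x : R), D x -> ex_derive_n f n x.

Definition Usol (a A Rf : R -> R) (r y : R) : R :=
  a y * / (cbrt (A y))^2 * Rf (r * cbrt (A y)).

Definition pde_lhs (mu sigma : R) (a : R -> R) (U : R -> R -> R) (r y : R) : R :=
  let Ur  := Derive (fun r' => U r' y) r in
  let Urr := Derive_n (fun r' => U r' y) 2 r in
  let Uy  := Derive (fun y' => U r y') y in
  let Urry := Derive (fun y' => Derive_n (fun r' => U r' y') 2 r) y in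
  Derive a y * U r y - a y * Uy - 3 * mu * (U r y)^2 * Ur
  + sigma * Uy * Urr - sigma * U r y * Urry.

Definition ode_lhs (mu sigma : R) (Rf : R -> R) (z : R) : R :=
  let R0 := Rf z in
  let R1 := Derive_n Rf 1 z in
  let R2 := Derive_n Rf 2 z in
  let R3 := Derive_n Rf 3 z in
  - sigma * z * R0 * R3 + sigma * z * R1 * R2 - 2 * sigma * R0 * R2
  - 9 * mu * R0^2 * R1 - z * R1 + 2 * R0.

From Stdlib Require Import Reals Lra.
From Coquelicot Require Import Coquelicot.
Open Scope R_scope.

(* Write [c(y) = A(y)^(1/3)], so that [c' = a / (3 c^2)], and [U(r,y) = g(y) R(r c(y))] with
   [g = a / c^2].  Derivatives in [r] only pull out powers of [c], so [U_rr = a R''(r c)], and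
   derivatives in [y] follow from the chain rule.  Substituting, the left-hand side of the PDE
   at [(r, y)] equals [a^3 / (3 c^5)] times the left-hand side of the ODE at [z = r c]; as this
   factor never vanishes and [r |-> r c(y)] is onto, the PDE holds iff the ODE does. *)

Lemma cbrt_pos x : 0 < x -> cbrt x = Rpower x (1/3).
Proof. intros Hx. unfold cbrt. destruct (Rlt_dec 0 x); [reflexivity | lra]. Qed.

Lemma cbrt_opp x : cbrt (- x) = - cbrt x.
Proof.
  unfold cbrt.
  destruct (Rlt_dec 0 (- x)), (Rlt_dec 0 x); try lra;
    destruct (Rlt_dec (- x) 0), (Rlt_dec x 0); rewrite ?Ropp_involutive; lra.
Qed.

Lemma cbrt_cube x : cbrt x ^ 3 = x.
Proof.
  assert (Hpos : forall t, 0 < t -> cbrt t ^ 3 = t).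
  { intros t Ht. rewrite cbrt_pos by exact Ht. simpl.
    rewrite Rmult_1_r, <- !Rpower_plus.
    replace (1/3 + (1/3 + 1/3)) with 1 by field. apply Rpower_1, Ht. }
  destruct (Rtotal_order x 0) as [Hx | [Hx | Hx]].
  - rewrite <- (Ropp_involutive x), cbrt_opp.
    replace ((- cbrt (- x)) ^ 3) with (- cbrt (- x) ^ 3) by ring.
    rewrite Hpos; lra.
  - subst x. unfold cbrt.
    destruct (Rlt_dec 0 0); [lra |]. destruct (Rlt_dec 0 0); [lra |]. ring.
  - exact (Hpos x Hx).
Qed.

Lemma cbrt_neq0 x : x <> 0 -> cbrt x <> 0.
Proof. intros Hx Hc. apply Hx. rewrite <- (cbrt_cube x), Hc. ring. Qed.

(* [Rpower x (1/3 - 1) = Rpower x (1/3) / x] gives the derivative in terms of [cbrt] itself. *)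
Lemma is_derive_cbrt_pos x : 0 < x -> is_derive cbrt x (cbrt x / (3 * x)).
Proof.
  intros Hx.
  apply is_derive_ext_loc with (fun t => Rpower t (1/3)).
  { apply (filter_imp (fun t => 0 < t)); [| exact (open_gt 0 x Hx)].
    intros t Ht. symmetry. apply cbrt_pos, Ht. }
  replace (cbrt x / (3 * x)) with (1/3 * Rpower x (1/3 - 1)).
  - apply is_derive_Reals, derivable_pt_lim_power, Hx.
  - rewrite cbrt_pos by exact Hx.
    unfold Rminus. rewrite Rpower_plus, Rpower_Ropp, Rpower_1 by exact Hx.
    field. lra.
Qed.

Lemma is_derive_cbrt x : x <> 0 -> is_derive cbrt x (/ (3 * cbrt x ^ 2)).
Proof.
  intros Hx.
  assert (Hc := cbrt_neq0 x Hx).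
  assert (Hd : cbrt x / (3 * x) = / (3 * cbrt x ^ 2)).
  { generalize (cbrt_cube x). generalize (cbrt x) Hc. intros c Hc0 Hx3.
    subst x. field. exact Hc0. }
  rewrite <- Hd.
  destruct (Rtotal_order x 0) as [Hneg | [H0 | Hpos]]; [| contradiction |].
  - apply is_derive_ext with (fun t => - cbrt (- t)).
    { intros t. rewrite cbrt_opp. apply Ropp_involutive. }
    replace (cbrt x / (3 * x)) with (- scal (-1) (cbrt (- x) / (3 * - x)))
      by (rewrite cbrt_opp; unfold scal; simpl; unfold mult; simpl; field; lra).
    apply (is_derive_opp (fun t => cbrt (- t))).
    apply (is_derive_comp cbrt (fun t => - t)).
    + apply is_derive_cbrt_pos. lra.
    + auto_derive; [exact I | ring].
  - apply is_derive_cbrt_pos, Hpos.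
Qed.

Lemma is_derive_cbrt_comp (A : R -> R) (y dA : R) :
  is_derive A y dA -> A y <> 0 ->
  is_derive (fun y' => cbrt (A y')) y (dA / (3 * cbrt (A y) ^ 2)).
Proof.
  intros HA HA0.
  replace (dA / (3 * cbrt (A y) ^ 2)) with (scal dA (/ (3 * cbrt (A y) ^ 2)))
    by (unfold scal; simpl; unfold mult; simpl; field; exact (cbrt_neq0 _ HA0)).
  exact (is_derive_comp cbrt A y _ _ (is_derive_cbrt _ HA0) HA).
Qed.

Lemma is_derive_mul_inv_sq (f h : R -> R) (y df dh : R) :
  is_derive f y df -> is_derive h y dh -> h y <> 0 ->
  is_derive (fun y' => f y' * / h y' ^ 2) y (df / h y ^ 2 - 2 * f y * dh / h y ^ 3).
Proof.
  intros Hf Hh Hh0.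
  assert (Hinv := is_derive_inv _ _ _ (is_derive_pow h 2 y _ Hh) (pow_nonzero _ 2 Hh0)).
  replace (df / h y ^ 2 - 2 * f y * dh / h y ^ 3)
    with (df * / h y ^ 2 + f y * (- (INR 2 * dh * h y ^ 1) / (h y ^ 2) ^ 2))
    by (simpl; field; exact Hh0).
  exact (is_derive_mult f _ y _ _ Hf Hinv Rmult_comm).
Qed.

Lemma Derive_n_scal_dilate (f : R -> R) (k s r : R) (n : nat) :
  (forall m z, ex_derive_n f m z) ->
  Derive_n (fun r' => k * f (r' * s)) n r = k * s ^ n * Derive_n f n (r * s).
Proof.
  intros Hf.
  rewrite (Derive_n_ext _ (fun r' => k * f (s * r')))
    by (intros t; rewrite (Rmult_comm t); reflexivity).
  rewrite Derive_n_scal_l, Derive_n_comp_scal, (Rmult_comm s r).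
  - ring.
  - apply filter_forall. intros z m _. apply Hf.
Qed.

Lemma is_derive_dilate_param (g c f : R -> R) (r y g' c' : R) :
  is_derive g y g' -> is_derive c y c' -> ex_derive f (r * c y) ->
  is_derive (fun y' => g y' * f (r * c y')) y
    (g' * f (r * c y) + g y * (r * c' * Derive f (r * c y))).
Proof.
  intros Hg Hc Hf.
  assert (Hfc : is_derive (fun y' => f (r * c y')) y (r * c' * Derive f (r * c y))).
  { apply (is_derive_comp f (fun y' => r * c y')).
    - apply Derive_correct, Hf.
    - apply is_derive_scal, Hc. }
  exact (is_derive_mult g _ y g' _ Hg Hfc Rmult_comm).
Qed.

Lemma pde_lhs_Usol (mu sigma : R) (a A Rf : R -> R) (r y : R) :
  ex_derive a y -> is_derive A y (a y) -> A y <> 0 ->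
  (forall n z, ex_derive_n Rf n z) ->
  pde_lhs mu sigma a (Usol a A Rf) r y =
  a y ^ 3 / (3 * cbrt (A y) ^ 5) * ode_lhs mu sigma Rf (r * cbrt (A y)).
Proof.
  intros Ha HA HA0 HRf.
  set (c := fun y' => cbrt (A y')).
  set (g := fun y' => a y' * / c y' ^ 2).
  assert (Hc0 : c y <> 0) by exact (cbrt_neq0 _ HA0).
  set (dc := a y / (3 * c y ^ 2)).
  set (dg := Derive a y / c y ^ 2 - 2 * a y * dc / c y ^ 3).
  assert (Hc : is_derive c y dc) by exact (is_derive_cbrt_comp A y _ HA HA0).
  assert (Hg : is_derive g y dg)
    by exact (is_derive_mul_inv_sq a c y _ _ (Derive_correct a y Ha) Hc Hc0).
  (* [g c^2] is [a] only where [c] does not vanish, so differentiate it as a product. *)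
  assert (Hgc2 : is_derive (fun y' => g y' * c y' ^ 2) y (Derive a y)).
  { assert (Hprod := is_derive_mult g _ y _ _ Hg (is_derive_pow c 2 y _ Hc) Rmult_comm).
    replace (Derive a y) with (dg * c y ^ 2 + g y * (INR 2 * dc * c y ^ 1))
      by (unfold dg, dc, g; simpl; field; exact Hc0).
    exact Hprod. }
  assert (Ur : Derive (fun r' => Usol a A Rf r' y) r = g y * c y ^ 1 * Derive_n Rf 1 (r * c y))
    by exact (Derive_n_scal_dilate Rf (g y) (c y) r 1 HRf).
  assert (Urr : forall y', Derive_n (fun r' => Usol a A Rf r' y') 2 r
                           = g y' * c y' ^ 2 * Derive_n Rf 2 (r * c y')).
  { intros y'. exact (Derive_n_scal_dilate Rf (g y') (c y') r 2 HRf). }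
  assert (Uy : Derive (fun y' => Usol a A Rf r y') y
               = dg * Rf (r * c y) + g y * (r * dc * Derive_n Rf 1 (r * c y))).
  { apply is_derive_unique, (is_derive_dilate_param g c Rf); auto. apply (HRf 1%nat). }
  assert (Urry : Derive (fun y' => g y' * c y' ^ 2 * Derive_n Rf 2 (r * c y')) y
                 = Derive a y * Derive_n Rf 2 (r * c y)
                   + g y * c y ^ 2 * (r * dc * Derive_n Rf 3 (r * c y))).
  { apply is_derive_unique, (is_derive_dilate_param (fun y' => g y' * c y' ^ 2) c); auto.
    apply (HRf 3%nat). }
  unfold pde_lhs, ode_lhs.
  rewrite Ur, (Derive_ext _ _ _ Urr), Urr, Uy, Urry.
  unfold Usol. fold (c y). fold (g y).
  unfold dg, dc, g. field. exact Hc0.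
Qed.

Lemma in_open_interval_inhabited (lo hi : Rbar) :
  Rbar_lt lo hi -> exists y, in_open_interval lo hi y.
Proof.
  unfold in_open_interval.
  destruct lo as [l | |], hi as [h | |]; simpl; intros H; try contradiction.
  - exists ((l + h) / 2). simpl. lra.
  - exists (l + 1). simpl. lra.
  - exists (h - 1). simpl. lra.
  - exists 0. simpl. auto.
Qed.

Theorem mainTheorem5 (mu sigma : R) (lo hi : Rbar) (a A Rf : R -> R) :
  mu <> 0 -> sigma <> 0 ->
  Rbar_lt lo hi ->
  smooth_on (in_open_interval lo hi) a ->
  (forall y, in_open_interval lo hi y -> a y <> 0) ->
  (forall y, in_open_interval lo hi y -> is_derive A y (a y)) ->
  (forall y, in_open_interval lo hi y -> A y <> 0) ->
  smooth_on (fun _ => True) Rf ->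
  ((forall r y, in_open_interval lo hi y -> pde_lhs mu sigma a (Usol a A Rf) r y = 0)
   <-> (forall z, ode_lhs mu sigma Rf z = 0)).
Proof.
  intros _ _ Hlohi Ha Ha0 HA HA0 HRf.
  assert (HRf' : forall n z, ex_derive_n Rf n z) by (intros n z; exact (HRf n z I)).
  split.
  - intros Hpde z.
    destruct (in_open_interval_inhabited _ _ Hlohi) as [y Hy].
    assert (Hc := cbrt_neq0 _ (HA0 y Hy)).
    assert (Hfactor : a y ^ 3 / (3 * cbrt (A y) ^ 5) <> 0).
    { apply Rmult_integral_contrapositive_currified.
      - apply pow_nonzero, Ha0, Hy.
      - apply Rinv_neq_0_compat, Rmult_integral_contrapositive_currified;
          [lra | apply pow_nonzero, Hc]. }
    specialize (Hpde (z / cbrt (A y)) y Hy).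
    rewrite pde_lhs_Usol in Hpde by (exact (Ha 1%nat y Hy) || auto).
    replace (z / cbrt (A y) * cbrt (A y)) with z in Hpde by (field; exact Hc).
    destruct (Rmult_integral _ _ Hpde) as [H | H]; [contradiction | exact H].
  - intros Hode r y Hy.
    rewrite pde_lhs_Usol, Hode by (exact (Ha 1%nat y Hy) || auto). ring.
Qed.
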